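(* Let $\rho$ be a primitive $k$th root of unity and $0<\theta<2\pi/k$. For all $N\ge1$ with $k\mid N$, $$\prod_{j=1}^N\big|\rho^je^{ij\theta/N}-1\big|^{-1}\ll N^{4k}\exp\Big(\frac Nk\cdot\frac{\mathrm{Cl}_2(k\theta)}{k\theta}\Big),$$ with implied constant depending only on $k$ and $\theta$.
   Context: $\mathrm{Cl}_2(\theta):=\sum_{k\ge1}k^{-2}\sin(k\theta)$ is the Clausen function. *)

From Stdlib Require Import Reals Lra Lia.
Open Scope R_scope.

Definition Cx : Type := (R * R)%type.
Definition Cone : Cx := (1, 0).
Definition Cmul (z w : Cx) : Cx :=
  (fst z * fst w - snd z * snd w, fst z * snd w + snd z * fst w).
Definition Csub (z w : Cx) : Cx := (fst z - fst w, snd z - snd w).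
Fixpoint Cpow (z : Cx) (n : nat) : Cx :=
  match n with O => Cone | S n' => Cmul z (Cpow z n') end.
Definition Cnorm (z : Cx) : R := sqrt (fst z ^ 2 + snd z ^ 2).
Definition Cexpi (t : R) : Cx := (cos t, sin t).

Definition primitive_root (rho : Cx) (k : nat) : Prop :=
  Cpow rho k = Cone /\ forall j : nat, (0 < j < k)%nat -> Cpow rho j <> Cone.

Fixpoint prod_from1 (f : nat -> R) (n : nat) : R :=
  match n with O => 1 | S n' => prod_from1 f n' * f (S n') end.

Definition Cl2_is (t l : R) : Prop :=
  infinite_sum (fun m : nat => sin (INR (S m) * t) / (INR (S m)) ^ 2) l.

From Coquelicot Require Import Coquelicot.
From Stdlib Require Import Reals Lra Lia Arith ZArith Ranalysis5.
Open Scope R_scope.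

(* Write rho = e^{i alpha} with k alpha in 2 pi Z and N = k M.  The j-th factor is
   exp (- L (y_j)), where L y = ln |e^{iy} - 1| (log_chord) and y_j = j (alpha + theta / N)
   mod 2 pi.  Splitting j = k (m - 1) + r, the angles of the residue class r form a grid of
   step h = theta / M inside [beta_r, beta_r + theta], beta_r = 2 pi ((s r) mod k) / k.
   The Clausen function satisfies Cl' = - L on (0, 2 pi) and L is concave there, so the
   midpoint rule gives h * sum_m L (y_(r,m)) >= Cl beta_r - Cl (beta_r + theta) - O(h).
   Summing over r with the distribution relation sum_r Cl (beta_r + x) = Cl (k x) / k gives
   sum_j L (y_j) >= - (N / k) * Cl (k theta) / (k theta) - O(1): the bound holds even
   without the factor N^(4k).

   Cl' = - L is obtained from the locally uniform convergence of sum_m cos (m x) / m on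
   (0, 2 pi), after an integration by parts; the additive constant it leaves undetermined
   is fixed by differentiating the duplication formula Cl (t + pi) + Cl t = Cl (2 t) / 2. *)

(** * Finite sums *)

Fixpoint sum_from1 (f : nat -> R) (n : nat) : R :=
  match n with O => 0 | S n' => sum_from1 f n' + f (S n') end.

Lemma sum_from1_ext f h n :
  (forall i, (1 <= i <= n)%nat -> f i = h i) -> sum_from1 f n = sum_from1 h n.
Proof.
  induction n as [|n IH]; intro E; simpl; [reflexivity|].
  rewrite IH, E; [reflexivity | lia | intros; apply E; lia].
Qed.

Lemma sum_from1_plus f h n :
  sum_from1 (fun i => f i + h i) n = sum_from1 f n + sum_from1 h n.
Proof. induction n as [|n IH]; simpl; [ring | rewrite IH; ring]. Qed.

Lemma sum_from1_scal c f n : sum_from1 (fun i => c * f i) n = c * sum_from1 f n.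
Proof. induction n as [|n IH]; simpl; [ring | rewrite IH; ring]. Qed.

Lemma sum_from1_const c n : sum_from1 (fun _ => c) n = INR n * c.
Proof. induction n as [|n IH]; simpl sum_from1; [simpl; ring | rewrite IH, S_INR; ring]. Qed.

Lemma sum_from1_le f h n :
  (forall i, (1 <= i <= n)%nat -> f i <= h i) -> sum_from1 f n <= sum_from1 h n.
Proof.
  induction n as [|n IH]; intro H; simpl; [lra|].
  apply Rplus_le_compat; [apply IH; intros; apply H | apply H]; lia.
Qed.

Lemma sum_from1_comm (F : nat -> nat -> R) m n :
  sum_from1 (fun i => sum_from1 (F i) n) m = sum_from1 (fun j => sum_from1 (fun i => F i j) m) n.
Proof.
  induction n as [|n IH]; simpl.
  - rewrite sum_from1_const; ring.
  - rewrite sum_from1_plus, IH; reflexivity.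
Qed.

Lemma sum_from1_add f a b :
  sum_from1 f (a + b) = sum_from1 f a + sum_from1 (fun i => f (a + i)%nat) b.
Proof.
  induction b as [|b IH]; simpl; [rewrite Nat.add_0_r; ring|].
  rewrite Nat.add_succ_r; simpl; rewrite IH; ring.
Qed.

Lemma sum_from1_blocks f k L :
  sum_from1 f (k * L) = sum_from1 (fun l => sum_from1 (fun r => f (k * (l - 1) + r)%nat) k) L.
Proof.
  induction L as [|L IH]; simpl; [rewrite Nat.mul_0_r; reflexivity|].
  rewrite Nat.mul_succ_r, sum_from1_add, IH, Nat.sub_0_r; reflexivity.
Qed.

Lemma sum_from1_last f n : (0 < n)%nat ->
  (forall i, (1 <= i < n)%nat -> f i = 0) -> sum_from1 f n = f n.
Proof.
  destruct n as [|n]; intros Hn H; [lia|]; simpl.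
  rewrite (sum_from1_ext _ (fun _ => 0)), sum_from1_const; [ring|].
  intros i Hi; apply H; lia.
Qed.

Lemma block_index k j : (0 < k)%nat -> (1 <= j)%nat ->
  exists m r, j = (k * (m - 1) + r)%nat /\ (1 <= r <= k)%nat /\ (1 <= m)%nat.
Proof.
  intros Hk Hj; exists (S ((j - 1) / k)), (S ((j - 1) mod k)).
  pose proof (Nat.div_mod (j - 1) k ltac:(lia)).
  pose proof (Nat.mod_upper_bound (j - 1) k ltac:(lia)).
  lia.
Qed.

Lemma sum_f_R0_sum_from1 f n : sum_f_R0 (fun i => f (S i)) n = sum_from1 f (S n).
Proof. induction n as [|n IH]; simpl in *; [ring | rewrite IH; reflexivity]. Qed.

Lemma sum_from1_cv (u : nat -> nat -> R) (l : nat -> R) k :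
  (forall r, Un_cv (u r) (l r)) -> Un_cv (fun n => sum_from1 (fun r => u r n) k) (sum_from1 l k).
Proof.
  intro H; induction k as [|k IH]; simpl.
  - intros e He; exists 0%nat; intros; unfold Rdist; rewrite Rminus_diag, Rabs_R0; lra.
  - apply CV_plus; [exact IH | apply H].
Qed.

Lemma prod_from1_exp F G n :
  (forall i, (1 <= i <= n)%nat -> F i = exp (- G i)) -> prod_from1 F n = exp (- sum_from1 G n).
Proof.
  induction n as [|n IH]; intro H; simpl.
  - rewrite Ropp_0, exp_0; reflexivity.
  - rewrite IH, H, <- exp_plus; [f_equal; ring | lia | intros; apply H; lia].
Qed.

(** * The Clausen series *)

Definition clausen_coef (x : R) (n : nat) : R := sin (INR n * x) / INR n ^ 2.

Lemma inv_sq_partial_sum_le n :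
  sum_f_R0 (fun m => / INR (S m) ^ 2) n <= 2 - / INR (S n).
Proof.
  induction n as [|n IH]; [simpl; lra|].
  rewrite tech5.
  assert (Hn : 0 < INR (S n)) by (apply lt_0_INR; lia).
  rewrite (S_INR (S n)).
  set (a := INR (S n)) in *.
  assert (/ (a + 1) ^ 2 <= / a - / (a + 1)).
  { replace (/ a - / (a + 1)) with (/ (a * (a + 1))) by (field; lra).
    apply Rinv_le_contravar; simpl; nra. }
  lra.
Qed.

Lemma inv_sq_summable : { l | Un_cv (sum_f_R0 (fun m => / INR (S m) ^ 2)) l }.
Proof.
  apply growing_cv.
  - intro n; rewrite tech5.
    assert (0 < / INR (S (S n)) ^ 2) by (apply Rinv_0_lt_compat, pow_lt, lt_0_INR; lia).
    lra.
  - exists 2; intros y [n ->].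
    pose proof (inv_sq_partial_sum_le n).
    assert (0 < / INR (S n)) by (apply Rinv_0_lt_compat, lt_0_INR; lia).
    lra.
Qed.

Lemma Rabs_clausen_coef_le x m : Rabs (clausen_coef x (S m)) <= / INR (S m) ^ 2.
Proof.
  unfold clausen_coef, Rdiv; rewrite Rabs_mult.
  assert (0 < / INR (S m) ^ 2) by (apply Rinv_0_lt_compat, pow_lt, lt_0_INR; lia).
  rewrite (Rabs_right (/ _)) by lra.
  assert (Rabs (sin (INR (S m) * x)) <= 1) by apply Rabs_le, SIN_bound.
  nra.
Qed.

Definition Clausen (x : R) : R := Series (fun m => clausen_coef x (S m)).

Lemma Clausen_cv x : Un_cv (sum_f_R0 (fun m => clausen_coef x (S m))) (Clausen x).
Proof.
  apply is_series_Reals, Series_correct, ex_series_Rabs.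
  apply (@ex_series_le R_AbsRing R_CompleteNormedModule _ (fun m => / INR (S m) ^ 2)).
  - intro n; change (Rabs (Rabs (clausen_coef x (S n))) <= / INR (S n) ^ 2).
    rewrite Rabs_Rabsolu; apply Rabs_clausen_coef_le.
  - destruct inv_sq_summable as [l Hl]; exists l; apply is_series_Reals, Hl.
Qed.

Lemma Cl2_is_Clausen x l : Cl2_is x l -> l = Clausen x.
Proof. intro H; exact (UL_sequence _ _ _ H (Clausen_cv x)). Qed.

Lemma Clausen_0 : Clausen 0 = 0.
Proof.
  symmetry; apply Cl2_is_Clausen; intros e He; exists 0%nat; intros n _.
  rewrite sum_eq_R0; [unfold Rdist; rewrite Rminus_0_r, Rabs_R0; lra|].
  intros i _; unfold clausen_coef; rewrite Rmult_0_r, sin_0; unfold Rdiv; ring.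
Qed.

Lemma Clausen_periodic y q : Clausen (y + 2 * INR q * PI) = Clausen y.
Proof.
  unfold Clausen; apply Series_ext; intro i; unfold clausen_coef; f_equal.
  replace (INR (S i) * (y + 2 * INR q * PI)) with (INR (S i) * y + 2 * INR (S i * q) * PI)
    by (rewrite mult_INR; ring).
  apply sin_period.
Qed.

Definition cos_coef (x : R) (m : nat) : R := cos (INR (S m) * x) / INR (S m).

Definition cos_sum (n : nat) (x : R) : R := sum_f_R0 (cos_coef x) n.

Lemma clausen_coef_derive m y :
  derivable_pt_lim (fun x => clausen_coef x (S m)) y (cos_coef y m).
Proof.
  apply is_derive_Reals; unfold clausen_coef, cos_coef.
  assert (0 < INR (S m)) by (apply lt_0_INR; lia).
  set (a := INR (S m)) in *; clearbody a.
  auto_derive; [exact I | field; lra].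
Qed.

Lemma clausen_partial_derive n y :
  derivable_pt_lim (fun x => sum_f_R0 (fun m => clausen_coef x (S m)) n) y (cos_sum n y).
Proof.
  unfold cos_sum; induction n as [|n IH]; simpl; [apply clausen_coef_derive|].
  apply (derivable_pt_lim_plus (fun x => sum_f_R0 (fun m => clausen_coef x (S m)) n));
    [exact IH | apply clausen_coef_derive].
Qed.

Lemma Clausen_continuous y : continuity_pt Clausen y.
Proof.
  set (r := mkposreal (Rabs y + 1) ltac:(pose proof (Rabs_pos y); lra)).
  set (fn := fun n x => clausen_coef x (S n)).
  set (cv := fun x => exist (fun l => Un_cv (fun N => SP fn N x) l) (Clausen x) (Clausen_cv x)).
  assert (HN : CVN_r fn r).
  { exists (fun n => / INR (S n) ^ 2).
    destruct inv_sq_summable as [l Hl]; exists l; split.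
    - intros e He; destruct (Hl e He) as [N HN]; exists N; intros n Hn.
      rewrite (sum_eq _ (fun m => / INR (S m) ^ 2)); [apply HN; exact Hn|].
      intros i _; apply Rabs_right, Rle_ge, Rlt_le, Rinv_0_lt_compat, pow_lt, lt_0_INR; lia.
    - intros n z _; apply Rabs_clausen_coef_le. }
  apply (CVU_continuity _ _ _ _ (CVN_CVU fn cv r HN)).
  - intros n z _; apply derivable_continuous_pt; exists (cos_sum n z).
    apply clausen_partial_derive.
  - unfold Boule; rewrite Rminus_0_r; simpl; lra.
Qed.

(** * The cosine series *)

(* [ln |e^(ix) - 1|], as [|e^(ix) - 1|^2 = 2 - 2 cos x]. *)
Definition log_chord (x : R) : R := ln (2 - 2 * cos x) / 2.

Lemma chord_sq_eq t : 2 - 2 * cos t = 4 * sin (t / 2) ^ 2.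
Proof. replace t with (2 * (t / 2)) at 1 by field; rewrite cos_2a_sin; ring. Qed.

Lemma chord_sq_pos t : 0 < t < 2 * PI -> 0 < 2 - 2 * cos t.
Proof.
  intro H; rewrite chord_sq_eq.
  assert (0 < sin (t / 2)) by (apply sin_gt_0; lra).
  nra.
Qed.

Lemma log_chord_PI : log_chord PI = ln 2.
Proof.
  unfold log_chord; rewrite cos_PI.
  replace (2 - 2 * -1) with (2 * 2) by ring.
  rewrite ln_mult by lra; field.
Qed.

Lemma log_chord_continuous y : 0 < y < 2 * PI -> continuity_pt log_chord y.
Proof.
  intro Hy; pose proof (chord_sq_pos y Hy).
  apply derivable_continuous_pt; exists (sin y / (2 - 2 * cos y)).
  apply is_derive_Reals; unfold log_chord; auto_derive; [lra | field; lra].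
Qed.

Lemma sin_sum_telescope y b K :
  2 * sin (b / 2) * sum_from1 (fun r => sin (y + INR r * b)) K
  = cos (y + b / 2) - cos (y + (INR K + 1 / 2) * b).
Proof.
  induction K as [|K IH].
  - simpl; replace (y + (0 + 1 / 2) * b) with (y + b / 2) by field; ring.
  - cbn [sum_from1]; rewrite Rmult_plus_distr_l, IH.
    pose proof (form2 (y + (INR K + 1 / 2) * b) (y + (INR (S K) + 1 / 2) * b)) as H.
    rewrite S_INR in *.
    replace ((y + (INR K + 1 / 2) * b - (y + (INR K + 1 + 1 / 2) * b)) / 2)
      with (- (b / 2)) in H by field.
    replace ((y + (INR K + 1 / 2) * b + (y + (INR K + 1 + 1 / 2) * b)) / 2)
      with (y + (INR K + 1) * b) in H by field.
    rewrite sin_neg in H; lra.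
Qed.

Lemma sin_sum_dirichlet n y :
  2 * sin (y / 2) * sum_f_R0 (fun i => sin (INR (S i) * y)) n
  = cos (y / 2) - cos ((INR n + 3 / 2) * y).
Proof.
  rewrite (sum_f_R0_sum_from1 (fun r => sin (INR r * y))).
  rewrite (sum_from1_ext _ (fun r => sin (0 + INR r * y))) by (intros; f_equal; ring).
  rewrite sin_sum_telescope, S_INR, !Rplus_0_l.
  replace ((INR n + 1 + 1 / 2) * y) with ((INR n + 3 / 2) * y) by field; reflexivity.
Qed.

Lemma sin_half_ge m t : 0 < m <= PI -> m <= t <= 2 * PI - m -> sin (m / 2) <= sin (t / 2).
Proof.
  intros Hm Ht; pose proof (form4 (t / 2) (m / 2)).
  assert (0 <= cos ((t / 2 + m / 2) / 2)) by (apply cos_ge_0; lra).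
  assert (0 <= sin ((t / 2 - m / 2) / 2)) by (apply sin_ge_0; lra).
  nra.
Qed.

Lemma Rabs_mul_div_le a b c d :
  Rabs a <= 1 -> Rabs b <= 1 -> 0 < d <= c -> Rabs (a * b / c) <= / d.
Proof.
  intros Ha Hb Hcd; unfold Rdiv; rewrite !Rabs_mult, (Rabs_right (/ c))
    by (apply Rle_ge, Rlt_le, Rinv_0_lt_compat; lra).
  assert (/ c <= / d) by (apply Rinv_le_contravar; lra).
  assert (0 < / c) by (apply Rinv_0_lt_compat; lra).
  pose proof (Rabs_pos a); pose proof (Rabs_pos b).
  assert (Rabs a * Rabs b <= 1) by nra.
  nra.
Qed.

Lemma cos_sum_derive n y :
  derivable_pt_lim (cos_sum n) y (- sum_f_R0 (fun i => sin (INR (S i) * y)) n).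
Proof.
  assert (Hcoef : forall m, derivable_pt_lim (fun x => cos_coef x m) y (- sin (INR (S m) * y))).
  { intro m; apply is_derive_Reals; unfold cos_coef.
    assert (0 < INR (S m)) by (apply lt_0_INR; lia).
    set (a := INR (S m)) in *; clearbody a.
    auto_derive; [exact I | field; lra]. }
  unfold cos_sum; induction n as [|n IH]; [apply Hcoef|].
  rewrite tech5, Ropp_plus_distr.
  exact (derivable_pt_lim_plus _ _ _ _ _ IH (Hcoef (S n))).
Qed.

(* [(cos_sum n + log_chord)' x = cos (w x) / (2 sin (x/2))] with [w = n + 3/2]; subtracting
   the boundary term of an integration by parts leaves a function with derivative [O(1/w)]. *)
Definition ibp_remainder (n : nat) (x : R) : R :=
  cos_sum n x - cos_sum n PI - ln 2 + log_chord x
  - sin ((INR n + 3 / 2) * x) / (2 * (INR n + 3 / 2) * sin (x / 2)).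

Definition d_ibp_remainder (n : nat) (y : R) : R :=
  sin ((INR n + 3 / 2) * y) * cos (y / 2) / (4 * (INR n + 3 / 2) * sin (y / 2) ^ 2).

Lemma ibp_remainder_derive n y : 0 < y < 2 * PI ->
  is_derive (ibp_remainder n) y (d_ibp_remainder n y).
Proof.
  intro Hy; unfold d_ibp_remainder.
  assert (Hs : 0 < sin (y / 2)) by (apply sin_gt_0; lra).
  pose proof (chord_sq_pos y Hy).
  set (sins := sum_f_R0 (fun i => sin (INR (S i) * y)) n).
  pose proof (sin_sum_dirichlet n y) as Htel; fold sins in Htel.
  apply (is_derive_ext (fun x => cos_sum n x + (- cos_sum n PI - ln 2 + log_chord x
           - sin ((INR n + 3 / 2) * x) / (2 * (INR n + 3 / 2) * sin (x / 2)))));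
    [intro t; unfold ibp_remainder; cbv beta; lra|].
  assert (Hw : 0 < INR n + 3 / 2) by (pose proof (pos_INR n); lra).
  set (w := INR n + 3 / 2) in *; clearbody w.
  assert (HE : is_derive (fun x => - cos_sum n PI - ln 2 + log_chord x
                                   - sin (w * x) / (2 * w * sin (x / 2))) y
                 (sins + sin (w * y) * cos (y / 2) / (4 * w * sin (y / 2) ^ 2))).
  { unfold log_chord; auto_derive.
    - change (y * / 2) with (y / 2); repeat split; try lra.
      assert (0 < 2 * w * sin (y / 2)) by (apply Rmult_lt_0_compat; lra); lra.
    - change (y * / 2) with (y / 2).
      replace sins with ((cos (y / 2) - cos (w * y)) / (2 * sin (y / 2)))
        by (rewrite <- Htel; field; lra).
      replace (sin y) with (2 * sin (y / 2) * cos (y / 2))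
        by (rewrite <- sin_2a; f_equal; field).
      replace (cos y) with (1 - 2 * sin (y / 2) * sin (y / 2))
        by (rewrite <- cos_2a_sin; f_equal; field).
      field; repeat split; apply Rgt_not_eq; nra. }
  apply is_derive_Reals; apply is_derive_Reals in HE.
  replace (sin (w * y) * cos (y / 2) / (4 * w * sin (y / 2) ^ 2))
    with (- sins + (sins + sin (w * y) * cos (y / 2) / (4 * w * sin (y / 2) ^ 2))) by ring.
  exact (derivable_pt_lim_plus _ _ _ _ _ (cos_sum_derive n y) HE).
Qed.

Definition remainder_const (m : R) : R := 1 / 2 + PI / (4 * sin (m / 2) ^ 2) + / (2 * sin (m / 2)).

Lemma ibp_remainder_variation n m x : 0 < m <= PI -> m <= x <= 2 * PI - m ->
  Rabs (ibp_remainder n x - ibp_remainder n PI)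
  <= PI * / (4 * (INR n + 3 / 2) * sin (m / 2) ^ 2).
Proof.
  intros Hm Hx.
  assert (Hw : 0 < INR n + 3 / 2) by (pose proof (pos_INR n); lra).
  assert (Hin : forall t, Rmin PI x <= t <= Rmax PI x -> m <= t <= 2 * PI - m)
    by (intros t Ht; unfold Rmin, Rmax in Ht; destruct (Rle_dec PI x); lra).
  destruct (MVT_gen (ibp_remainder n) PI x (d_ibp_remainder n)) as [c [Hc ->]].
  - intros t Ht; apply ibp_remainder_derive.
    pose proof (Hin t (conj (Rlt_le _ _ (proj1 Ht)) (Rlt_le _ _ (proj2 Ht)))); lra.
  - intros t Ht; pose proof (Hin t Ht).
    apply derivable_continuous_pt; exists (d_ibp_remainder n t).
    apply is_derive_Reals, ibp_remainder_derive; lra.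
  - pose proof (Hin c Hc); pose proof (sin_half_ge m c Hm ltac:(lra)).
    assert (0 < sin (m / 2)) by (apply sin_gt_0; lra).
    rewrite Rabs_mult, Rmult_comm; apply Rmult_le_compat;
      [apply Rabs_pos | apply Rabs_pos | apply Rabs_le; lra |].
    apply Rabs_mul_div_le; [apply Rabs_le, SIN_bound | apply Rabs_le, COS_bound |].
    split; [apply Rmult_lt_0_compat, pow_lt; lra|].
    apply Rmult_le_compat_l; [lra | apply pow_incr; lra].
Qed.

Lemma Rabs_ibp_remainder_PI n : Rabs (ibp_remainder n PI) <= / (2 * (INR n + 3 / 2)).
Proof.
  assert (0 < INR n + 3 / 2) by (pose proof (pos_INR n); lra).
  replace (ibp_remainder n PI) with (- sin ((INR n + 3 / 2) * PI) * 1 / (2 * (INR n + 3 / 2)))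
    by (unfold ibp_remainder; rewrite log_chord_PI, sin_PI2; field; lra).
  apply Rabs_mul_div_le; [rewrite Rabs_Ropp; apply Rabs_le, SIN_bound | rewrite Rabs_R1 |]; lra.
Qed.

Lemma cos_sum_log_chord_bound m n x : 0 < m <= PI -> m <= x <= 2 * PI - m ->
  Rabs (cos_sum n x - cos_sum n PI - ln 2 + log_chord x) <= remainder_const m / (INR n + 3 / 2).
Proof.
  intros Hm Hx.
  assert (Hsm : 0 < sin (m / 2)) by (apply sin_gt_0; lra).
  assert (Hw : 0 < INR n + 3 / 2) by (pose proof (pos_INR n); lra).
  pose proof (ibp_remainder_variation n m x Hm Hx); pose proof (Rabs_ibp_remainder_PI n).
  assert (Hbdry : Rabs (sin ((INR n + 3 / 2) * x) / (2 * (INR n + 3 / 2) * sin (x / 2)))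
                  <= / (2 * (INR n + 3 / 2) * sin (m / 2))).
  { pose proof (sin_half_ge m x Hm Hx).
    rewrite <- (Rmult_1_r (sin _)).
    apply Rabs_mul_div_le; [apply Rabs_le, SIN_bound | rewrite Rabs_R1; lra |].
    split; [apply Rmult_lt_0_compat|apply Rmult_le_compat_l]; lra. }
  replace (cos_sum n x - cos_sum n PI - ln 2 + log_chord x) with
    (ibp_remainder n PI + (ibp_remainder n x - ibp_remainder n PI)
     + sin ((INR n + 3 / 2) * x) / (2 * (INR n + 3 / 2) * sin (x / 2)))
    by (unfold ibp_remainder; ring).
  replace (remainder_const m / (INR n + 3 / 2)) with
    (/ (2 * (INR n + 3 / 2)) + PI * / (4 * (INR n + 3 / 2) * sin (m / 2) ^ 2)
     + / (2 * (INR n + 3 / 2) * sin (m / 2)))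
    by (unfold remainder_const; field; lra).
  pose proof (Rabs_triang (ibp_remainder n PI + (ibp_remainder n x - ibp_remainder n PI))
               (sin ((INR n + 3 / 2) * x) / (2 * (INR n + 3 / 2) * sin (x / 2)))).
  pose proof (Rabs_triang (ibp_remainder n PI) (ibp_remainder n x - ibp_remainder n PI)).
  lra.
Qed.

Lemma cos_INR_mul_PI n : cos (INR n * PI) = (-1) ^ n.
Proof.
  induction n as [|n IH]; [simpl; rewrite Rmult_0_l; apply cos_0|].
  rewrite S_INR, Rmult_plus_distr_r, Rmult_1_l, neg_cos, IH; simpl; ring.
Qed.

Lemma cos_sum_PI_eq n : cos_sum n PI = - sum_f_R0 (tg_alt (fun i => / INR (S i))) n.
Proof.
  assert (Hterm : forall i, cos_coef PI i = - tg_alt (fun i => / INR (S i)) i).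
  { intro i; unfold cos_coef, tg_alt; rewrite cos_INR_mul_PI; simpl pow.
    field; apply not_0_INR; lia. }
  unfold cos_sum; induction n as [|n IH]; [apply Hterm|].
  rewrite !tech5, IH, Hterm; ring.
Qed.

Lemma cos_sum_PI_cv : { l | Un_cv (fun n => cos_sum n PI) l }.
Proof.
  set (u := fun n => / INR (S n)).
  assert (Hdec : Un_decreasing u)
    by (intro n; apply Rinv_le_contravar; [apply lt_0_INR | apply le_INR]; lia).
  assert (Hcv : Un_cv u 0).
  { apply (cv_infty_cv_0 (fun n => INR (S n))); intro M.
    destruct (INR_unbounded M) as [N HN]; exists N; intros n Hn.
    apply Rlt_le_trans with (INR N); [lra | apply le_INR; lia]. }
  destruct (alternated_series u Hdec Hcv) as [l Hl].
  exists (- l); intros e He; destruct (Hl e He) as [N HN]; exists N; intros n Hn.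
  unfold Rdist; rewrite cos_sum_PI_eq; fold u.
  replace (- sum_f_R0 (tg_alt u) n - - l) with (- (sum_f_R0 (tg_alt u) n - l)) by ring.
  rewrite Rabs_Ropp; apply HN, Hn.
Qed.

Lemma cos_sum_unif_cv m l : 0 < m <= PI -> Un_cv (fun n => cos_sum n PI) l ->
  forall eps, 0 < eps -> exists N, forall n y, (N <= n)%nat -> m <= y <= 2 * PI - m ->
    Rabs (l + ln 2 - log_chord y - cos_sum n y) < eps.
Proof.
  intros Hm Hl eps Heps.
  destruct (Hl (eps / 2)) as [N1 HN1]; [lra|].
  destruct (INR_unbounded (remainder_const m * 2 / eps)) as [N2 HN2].
  exists (max N1 N2); intros n y Hn Hy.
  assert (Hrem : remainder_const m / (INR n + 3 / 2) < eps / 2).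
  { assert (INR N2 <= INR n) by (apply le_INR; lia).
    apply Rmult_lt_reg_r with (INR n + 3 / 2); [pose proof (pos_INR n); lra|].
    replace (remainder_const m / (INR n + 3 / 2) * (INR n + 3 / 2)) with (remainder_const m)
      by (field; pose proof (pos_INR n); lra).
    apply Rmult_lt_compat_r with (r := eps / 2) in HN2; [|lra].
    replace (remainder_const m * 2 / eps * (eps / 2)) with (remainder_const m) in HN2
      by (field; lra).
    nra. }
  assert (Hpi : Rabs (cos_sum n PI - l) < eps / 2) by (apply HN1; lia).
  pose proof (cos_sum_log_chord_bound m n y Hm Hy).
  rewrite Rabs_minus_sym in Hpi.
  replace (l + ln 2 - log_chord y - cos_sum n y)
    with (- (cos_sum n y - cos_sum n PI - ln 2 + log_chord y) + (l - cos_sum n PI)) by ring.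
  pose proof (Rabs_triang (- (cos_sum n y - cos_sum n PI - ln 2 + log_chord y))
                (l - cos_sum n PI)).
  rewrite Rabs_Ropp in *; lra.
Qed.

Lemma Clausen_derive_up_to_const :
  exists c, forall x, 0 < x < 2 * PI -> is_derive Clausen x (c - log_chord x).
Proof.
  destruct cos_sum_PI_cv as [l Hl]; exists (l + ln 2); intros x0 Hx0.
  set (m := Rmin x0 (2 * PI - x0) / 2).
  assert (Hm : 0 < m <= PI) by (unfold m, Rmin; destruct (Rle_dec x0 (2 * PI - x0)); lra).
  assert (Hball : forall y, Boule x0 (mkposreal m (proj1 Hm)) y -> m <= y <= 2 * PI - m).
  { intros y Hy; unfold Boule in Hy; simpl in Hy; apply Rabs_def2 in Hy.
    unfold m, Rmin in *; destruct (Rle_dec x0 (2 * PI - x0)); lra. }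
  apply is_derive_Reals.
  apply (derivable_pt_lim_CVU (fun n x => sum_f_R0 (fun i => clausen_coef x (S i)) n) cos_sum
           Clausen (fun y => l + ln 2 - log_chord y) x0 x0 (mkposreal m (proj1 Hm))).
  - unfold Boule; rewrite Rminus_diag, Rabs_R0; simpl; lra.
  - intros y n _; apply clausen_partial_derive.
  - intros y _; apply Clausen_cv.
  - intros eps Heps; destruct (cos_sum_unif_cv m l Hm Hl eps Heps) as [N HN].
    exists N; intros n y Hn Hy; apply HN; [exact Hn | apply Hball, Hy].
  - intros y Hy; pose proof (Hball y Hy).
    apply continuity_pt_minus; [apply continuity_pt_const; intros a b; reflexivity|].
    apply log_chord_continuous; lra.
Qed.

(** * The distribution relation *)

Lemma sin_sum_full_turn_zero y b k q :
  INR k * b = 2 * INR q * PI -> cos b <> 1 -> sum_from1 (fun r => sin (y + INR r * b)) k = 0.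
Proof.
  intros Hk Hb.
  assert (Hs : sin (b / 2) <> 0).
  { intro H0; apply Hb; replace b with (2 * (b / 2)) by field; rewrite cos_2a_sin, H0; ring. }
  apply (Rmult_eq_reg_l (2 * sin (b / 2))); [|lra].
  rewrite sin_sum_telescope.
  replace (y + (INR k + 1 / 2) * b) with (y + b / 2 + 2 * INR q * PI) by lra.
  rewrite cos_period; ring.
Qed.

Section Distribution.

Variables (k s : nat) (alpha : R).
Hypothesis k_pos : (0 < k)%nat.
Hypothesis k_alpha : INR k * alpha = 2 * INR s * PI.
Hypothesis cos_alpha_ne1 :
  forall n, (0 < n)%nat -> (n mod k <> 0)%nat -> cos (INR n * alpha) <> 1.

Definition rotated_coef (x : R) (n : nat) : R :=
  sum_from1 (fun r => clausen_coef (x + INR r * alpha) n) k.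

Lemma rotated_coef_eq x n :
  rotated_coef x n = sum_from1 (fun r => sin (INR n * x + INR r * (INR n * alpha))) k / INR n ^ 2.
Proof.
  unfold rotated_coef, clausen_coef, Rdiv; rewrite Rmult_comm, <- sum_from1_scal.
  apply sum_from1_ext; intros r _; rewrite Rmult_comm; do 2 f_equal; ring.
Qed.

Lemma rotated_coef_zero x n : (0 < n)%nat -> (n mod k <> 0)%nat -> rotated_coef x n = 0.
Proof.
  intros Hn Hmod; rewrite rotated_coef_eq, (sin_sum_full_turn_zero _ _ k (s * n)).
  - unfold Rdiv; ring.
  - rewrite mult_INR, <- Rmult_assoc, (Rmult_comm (INR k)), Rmult_assoc, k_alpha; ring.
  - apply cos_alpha_ne1; assumption.
Qed.

Lemma rotated_coef_multiple x l :
  rotated_coef x (k * l) = clausen_coef (INR k * x) l / INR k.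
Proof.
  rewrite rotated_coef_eq.
  rewrite (sum_from1_ext _ (fun _ => sin (INR (k * l) * x))).
  2: { intros r _; rewrite !mult_INR.
       replace (INR r * (INR k * INR l * alpha)) with (2 * INR (r * l * s) * PI)
         by (replace (INR k * INR l * alpha) with (INR l * (INR k * alpha)) by ring;
             rewrite k_alpha, !mult_INR; ring).
       apply sin_period. }
  rewrite sum_from1_const; unfold clausen_coef; rewrite mult_INR.
  assert (0 < INR k) by (apply lt_0_INR; lia).
  destruct l as [|l].
  { change (INR 0) with 0; rewrite !Rmult_0_r, !Rmult_0_l, sin_0; unfold Rdiv; ring. }
  assert (0 < INR (S l)) by (apply lt_0_INR; lia).
  replace (INR k * INR (S l) * x) with (INR (S l) * (INR k * x)) by ring.
  field; lra.
Qed.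

Lemma rotated_partial_sum x L :
  sum_from1 (rotated_coef x) (k * L) = sum_from1 (clausen_coef (INR k * x)) L / INR k.
Proof.
  rewrite sum_from1_blocks; unfold Rdiv; rewrite Rmult_comm, <- sum_from1_scal.
  apply sum_from1_ext; intros l Hl.
  rewrite sum_from1_last; [| exact k_pos |].
  - replace (k * (l - 1) + k)%nat with (k * l)%nat by nia.
    rewrite rotated_coef_multiple; unfold Rdiv; ring.
  - intros r Hr; apply rotated_coef_zero; [nia|].
    replace (k * (l - 1) + r)%nat with (r + (l - 1) * k)%nat by ring.
    rewrite Nat.Div0.mod_add, Nat.mod_small; lia.
Qed.

(* Only coefficients of index divisible by [k] survive, so the partial sums of length
   [k L] are those of [Clausen (k x) / k]. *)
Lemma Clausen_distribution x :
  sum_from1 (fun r => Clausen (x + INR r * alpha)) k = Clausen (INR k * x) / INR k.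
Proof.
  set (P := fun n => sum_f_R0 (fun m => rotated_coef x (S m)) n).
  assert (Hrot : Un_cv P (sum_from1 (fun r => Clausen (x + INR r * alpha)) k)).
  { apply (Un_cv_ext (fun n => sum_from1
             (fun r => sum_f_R0 (fun m => clausen_coef (x + INR r * alpha) (S m)) n) k)).
    - intro n; unfold P; rewrite sum_f_R0_sum_from1.
      rewrite (sum_from1_ext _ (fun r => sum_from1 (clausen_coef (x + INR r * alpha)) (S n)))
        by (intros; apply sum_f_R0_sum_from1).
      apply (sum_from1_comm (fun r j => clausen_coef (x + INR r * alpha) j)).
    - apply sum_from1_cv; intro r; apply Clausen_cv. }
  assert (Hsub : Un_cv (fun L => P (k * S L - 1)%nat) (Clausen (INR k * x) / INR k)).
  { apply (Un_cv_ext (fun L => sum_f_R0 (fun m => clausen_coef (INR k * x) (S m)) L * / INR k)).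
    - intro L; unfold P; rewrite !sum_f_R0_sum_from1.
      replace (S (k * S L - 1)) with (k * S L)%nat by nia.
      rewrite rotated_partial_sum; reflexivity.
    - apply CV_mult; [apply Clausen_cv|].
      intros e He; exists 0%nat; intros; unfold Rdist; rewrite Rminus_diag, Rabs_R0; lra. }
  apply (UL_sequence (fun L => P (k * S L - 1)%nat)); [|exact Hsub].
  intros e He; destruct (Hrot e He) as [N HN]; exists N; intros n Hn; apply HN; nia.
Qed.

Definition residue_angle (r : nat) : R := 2 * PI * INR ((s * r) mod k) / INR k.

Lemma INR_mul_alpha r : INR r * alpha = residue_angle r + 2 * INR (s * r / k) * PI.
Proof.
  assert (0 < INR k) by (apply lt_0_INR; lia).
  apply (Rmult_eq_reg_l (INR k)); [|lra].
  replace (INR k * (INR r * alpha)) with (INR r * (INR k * alpha)) by ring.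
  rewrite k_alpha; unfold residue_angle.
  replace (INR k * (2 * PI * INR ((s * r) mod k) / INR k + 2 * INR (s * r / k) * PI))
    with (2 * PI * (INR k * INR (s * r / k) + INR ((s * r) mod k))) by (field; lra).
  rewrite <- mult_INR, <- plus_INR, <- Nat.div_mod by lia; rewrite mult_INR; ring.
Qed.

Lemma residue_angle_k : residue_angle k = 0.
Proof. unfold residue_angle; rewrite Nat.Div0.mod_mul; simpl; unfold Rdiv; ring. Qed.

Lemma residue_angle_bounds r : (0 < r < k)%nat ->
  2 * PI / INR k <= residue_angle r <= 2 * PI - 2 * PI / INR k.
Proof.
  intro Hr.
  assert (Hmod : ((s * r) mod k <> 0)%nat).
  { intro H0; apply (cos_alpha_ne1 r); [lia | rewrite Nat.mod_small; lia |].
    rewrite INR_mul_alpha; unfold residue_angle; rewrite H0; change (INR 0) with 0.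
    replace (2 * PI * 0 / INR k) with 0 by (unfold Rdiv; ring).
    rewrite cos_period, cos_0; reflexivity. }
  pose proof (Nat.mod_upper_bound (s * r) k ltac:(lia)).
  assert (1 <= INR ((s * r) mod k)) by (apply (le_INR 1); lia).
  assert (INR ((s * r) mod k) <= INR k - 1)
    by (replace (INR k - 1) with (INR (k - 1)) by (rewrite minus_INR by lia; reflexivity);
        apply le_INR; lia).
  assert (0 < INR k) by (apply lt_0_INR; lia).
  pose proof PI_RGT_0.
  unfold residue_angle, Rdiv; split.
  - apply Rmult_le_compat_r; [apply Rlt_le, Rinv_0_lt_compat; lra | nra].
  - replace (2 * PI - 2 * PI * / INR k) with (2 * PI * (INR k - 1) * / INR k) by (field; lra).
    apply Rmult_le_compat_r; [apply Rlt_le, Rinv_0_lt_compat; lra | nra].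
Qed.

Lemma Clausen_residue_sum x :
  sum_from1 (fun r => Clausen (residue_angle r + x)) k = Clausen (INR k * x) / INR k.
Proof.
  rewrite <- Clausen_distribution; apply sum_from1_ext; intros r _.
  rewrite INR_mul_alpha, <- (Clausen_periodic (residue_angle r + x) (s * r / k)).
  f_equal; ring.
Qed.

End Distribution.

(** * The derivative of the Clausen function *)

Lemma Clausen_duplication t : Clausen (t + PI) + Clausen t = Clausen (2 * t) / 2.
Proof.
  assert (Hodd : forall n, (0 < n)%nat -> (n mod 2 <> 0)%nat -> cos (INR n * PI) <> 1).
  { intros n _ Hn; rewrite cos_INR_mul_PI.
    replace n with (S (2 * (n / 2)))
      by (pose proof (Nat.div_mod n 2 ltac:(lia));
          pose proof (Nat.mod_upper_bound n 2 ltac:(lia)); lia).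
    rewrite pow_1_odd; lra. }
  pose proof (Clausen_distribution 2 1 PI ltac:(lia) ltac:(simpl; ring) Hodd t) as H.
  simpl sum_from1 in H.
  replace (t + (1 + 1) * PI) with (t + 2 * INR 1 * PI) in H by (simpl; ring).
  rewrite Clausen_periodic, Rplus_0_l, Rmult_1_l in H.
  replace (INR 2) with 2 in H by (simpl; ring).
  rewrite H; field.
Qed.

Lemma is_derive_affine_comp f a b x l :
  is_derive f (a * x + b) l -> is_derive (fun t => f (a * t + b)) x (a * l).
Proof.
  intro H; apply (is_derive_comp f (fun t => a * t + b)); [exact H|].
  auto_derive; [exact I | ring].
Qed.

Lemma Clausen_derive x : 0 < x < 2 * PI -> is_derive Clausen x (- log_chord x).
Proof.
  intro Hx; destruct Clausen_derive_up_to_const as [c Hc].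
  assert (HPI := PI_RGT_0).
  assert (H1 : is_derive (fun t => Clausen (1 * t + PI) + Clausen (1 * t + 0)) (PI / 2)
                 (1 * (c - log_chord (1 * (PI / 2) + PI))
                  + 1 * (c - log_chord (1 * (PI / 2) + 0)))).
  { apply (is_derive_plus (fun t => Clausen (1 * t + PI)) (fun t => Clausen (1 * t + 0)));
      apply is_derive_affine_comp, Hc; lra. }
  assert (H2 : is_derive (fun t => / 2 * Clausen (2 * t + 0)) (PI / 2)
                 (/ 2 * (2 * (c - log_chord (2 * (PI / 2) + 0))))).
  { apply is_derive_scal, is_derive_affine_comp, Hc; lra. }
  (* Differentiating the duplication formula at [PI / 2] forces [c = 0]. *)
  apply (is_derive_ext _ (fun t => / 2 * Clausen (2 * t + 0))) in H1.
  2: { intro t; rewrite !Rmult_1_l, !Rplus_0_r, Clausen_duplication; lra. }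
  apply is_derive_unique in H1, H2; rewrite H2 in H1.
  replace (2 * (PI / 2) + 0) with PI in H1 by field.
  replace (1 * (PI / 2) + 0) with (PI / 2) in H1 by field.
  replace (1 * (PI / 2) + PI) with (3 * (PI / 2)) in H1 by field.
  rewrite log_chord_PI in H1; unfold log_chord in H1.
  rewrite cos_3PI2, cos_PI2, Rmult_0_r, Rminus_0_r in H1.
  replace (- log_chord x) with (c - log_chord x) by lra.
  apply Hc, Hx.
Qed.

(** * The midpoint rule *)

(* Also where [cos x = 1], since Stdlib's [ln] is [0] on nonpositive arguments. *)
Lemma log_chord_le_ln2 x : log_chord x <= ln 2.
Proof.
  pose proof ln_lt_2.
  unfold log_chord; destruct (Rlt_dec 0 (2 - 2 * cos x)) as [Hpos|Hnpos].
  - assert (Hle : ln (2 - 2 * cos x) <= ln (2 * 2))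
      by (apply ln_le; [exact Hpos | pose proof (COS_bound x); lra]).
    rewrite ln_mult in Hle by lra; lra.
  - replace (ln (2 - 2 * cos x)) with 0; [lra|].
    unfold ln; destruct (Rlt_dec 0 (2 - 2 * cos x)); [contradiction | reflexivity].
Qed.

Lemma log_chord_ge_margin m x : 0 < m <= PI -> m <= x <= 2 * PI - m ->
  log_chord m <= log_chord x.
Proof.
  intros Hm Hx.
  assert (Hcos : cos x <= cos m).
  { destruct (Rle_dec x PI); [apply cos_decr_1; lra|].
    replace (cos x) with (cos (2 * PI - x)) by (rewrite cos_minus, cos_2PI, sin_2PI; ring).
    apply cos_decr_1; lra. }
  assert (0 < 2 - 2 * cos m) by (apply chord_sq_pos; lra).
  unfold log_chord; apply Rmult_le_compat_r; [lra | apply ln_le; lra].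
Qed.

Lemma log_chord_midpoint_concave y u : 0 <= u -> 0 < y - u -> y + u < 2 * PI ->
  log_chord (y + u) + log_chord (y - u) <= 2 * log_chord y.
Proof.
  intros Hu H1 H2.
  assert (Dp : 0 < 2 - 2 * cos (y + u)) by (apply chord_sq_pos; lra).
  assert (Dm : 0 < 2 - 2 * cos (y - u)) by (apply chord_sq_pos; lra).
  assert (Dy : 0 < 2 - 2 * cos y) by (apply chord_sq_pos; lra).
  assert (Hprod : (2 - 2 * cos (y + u)) * (2 - 2 * cos (y - u)) = 4 * (cos u - cos y) ^ 2).
  { rewrite cos_plus, cos_minus; pose proof (sin2_cos2 y); pose proof (sin2_cos2 u).
    unfold Rsqr in *; nra. }
  assert (Hcu : 0 <= cos u - cos y).
  { rewrite form2.
    replace ((u - y) / 2) with (- ((y - u) / 2)) by field; rewrite sin_neg.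
    assert (0 < sin ((y - u) / 2)) by (apply sin_gt_0; lra).
    assert (0 < sin ((u + y) / 2)) by (apply sin_gt_0; lra).
    nra. }
  assert (cos u - cos y <= 1 - cos y) by (pose proof (COS_bound u); lra).
  assert (ln ((2 - 2 * cos (y + u)) * (2 - 2 * cos (y - u)))
          <= ln ((2 - 2 * cos y) * (2 - 2 * cos y)))
    by (apply ln_le; [apply Rmult_lt_0_compat; lra | rewrite Hprod; nra]).
  unfold log_chord; rewrite !ln_mult in H0 by lra; lra.
Qed.

Lemma Clausen_midpoint_le y t : 0 <= t -> 0 < y - t -> y + t < 2 * PI ->
  Clausen (y - t) - Clausen (y + t) <= 2 * t * log_chord y.
Proof.
  intros Ht H1 H2.
  set (F := fun u => Clausen (-1 * u + y) - Clausen (1 * u + y) - 2 * u * log_chord y).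
  assert (HF : forall u, 0 <= u <= t -> is_derive F u
                 (log_chord (-1 * u + y) + log_chord (1 * u + y) - 2 * log_chord y)).
  { intros u Hu.
    assert (A1 := is_derive_affine_comp Clausen (-1) y u _
                    (Clausen_derive (-1 * u + y) ltac:(lra))).
    assert (A2 := is_derive_affine_comp Clausen 1 y u _ (Clausen_derive (1 * u + y) ltac:(lra))).
    assert (A3 : is_derive (fun u => 2 * u * log_chord y) u (2 * log_chord y))
      by (auto_derive; [exact I | ring]).
    apply is_derive_Reals in A1, A2, A3; apply is_derive_Reals.
    replace (log_chord (-1 * u + y) + log_chord (1 * u + y) - 2 * log_chord y)
      with (-1 * - log_chord (-1 * u + y) - 1 * - log_chord (1 * u + y) - 2 * log_chord y) by ring.
    exact (derivable_pt_lim_minus _ _ _ _ _ (derivable_pt_lim_minus _ _ _ _ _ A1 A2) A3). }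
  destruct (MVT_gen F 0 t (fun u => log_chord (-1 * u + y) + log_chord (1 * u + y)
                                    - 2 * log_chord y)) as [c [Hc E]].
  - intros u Hu; rewrite Rmin_left, Rmax_right in Hu by lra; apply HF; lra.
  - intros u Hu; rewrite Rmin_left, Rmax_right in Hu by lra.
    apply derivable_continuous_pt; eexists; apply is_derive_Reals, HF; lra.
  - rewrite Rmin_left, Rmax_right in Hc by lra.
    pose proof (log_chord_midpoint_concave y c ltac:(lra) ltac:(lra) ltac:(lra)).
    unfold F in E.
    replace (-1 * t + y) with (y - t) in E by ring; replace (1 * t + y) with (y + t) in E by ring.
    replace (-1 * 0 + y) with y in E by ring; replace (1 * 0 + y) with y in E by ring.
    replace (-1 * c + y) with (y - c) in E by ring; replace (1 * c + y) with (y + c) in E by ring.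
    nra.
Qed.

Lemma Clausen_riemann_le c h n : 0 < h -> 0 < c + h / 2 -> c + (INR n + 1 / 2) * h < 2 * PI ->
  Clausen (c + h / 2) - Clausen (c + (INR n + 1 / 2) * h)
  <= h * sum_from1 (fun m => log_chord (c + INR m * h)) n.
Proof.
  intros Hh Hc; induction n as [|n IH]; intro Hn.
  - simpl; replace (c + (0 + 1 / 2) * h) with (c + h / 2) by field; lra.
  - rewrite S_INR in Hn; cbn [sum_from1].
    pose proof (pos_INR n).
    pose proof (Clausen_midpoint_le (c + INR (S n) * h) (h / 2) ltac:(lra)) as Hm.
    rewrite S_INR in Hm |- *.
    replace (c + (INR n + 1) * h - h / 2) with (c + (INR n + 1 / 2) * h) in Hm by field.
    replace (c + (INR n + 1) * h + h / 2) with (c + (INR n + 1 + 1 / 2) * h) in Hm by field.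
    assert (IH' := IH ltac:(nra)); assert (Hm' := Hm ltac:(nra) ltac:(nra)).
    rewrite Rmult_plus_distr_l; lra.
Qed.

Lemma Clausen_sub_le m a b : 0 < m <= PI -> 0 <= a -> b < 2 * PI ->
  a <= b \/ (m <= b /\ b <= a <= 2 * PI - m) ->
  Clausen a - Clausen b <= Rabs (b - a) * (ln 2 + Rabs (log_chord m)).
Proof.
  intros Hm Ha Hb Hab.
  pose proof ln_lt_2.
  assert (HK : 0 <= Rabs (log_chord m)) by apply Rabs_pos.
  destruct (MVT_gen Clausen a b (fun x => - log_chord x)) as [c [Hc E]].
  - intros u Hu; apply Clausen_derive; unfold Rmin, Rmax in Hu;
      destruct (Rle_dec a b); lra.
  - intros u _; apply Clausen_continuous.
  - destruct Hab as [Hab | [Hmb Hba]].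
    + rewrite Rmin_left, Rmax_right in Hc by lra; rewrite Rabs_right by lra.
      pose proof (log_chord_le_ln2 c); nra.
    + rewrite Rmin_right, Rmax_left in Hc by lra; rewrite Rabs_left1 by lra.
      pose proof (log_chord_ge_margin m c Hm ltac:(lra)).
      pose proof (Rle_abs (- log_chord m)); rewrite Rabs_Ropp in *.
      nra.
Qed.

(** * Roots of unity *)

Definition Cnorm_sq (z : Cx) : R := fst z ^ 2 + snd z ^ 2.

Lemma Cnorm_sq_mul z w : Cnorm_sq (Cmul z w) = Cnorm_sq z * Cnorm_sq w.
Proof. unfold Cnorm_sq, Cmul; simpl; ring. Qed.

Lemma Cnorm_sq_pow z n : Cnorm_sq (Cpow z n) = Cnorm_sq z ^ n.
Proof.
  induction n as [|n IH]; simpl; [unfold Cnorm_sq, Cone; simpl; ring|].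
  rewrite Cnorm_sq_mul, IH; ring.
Qed.

Lemma Cmul_Cexpi a b : Cmul (Cexpi a) (Cexpi b) = Cexpi (a + b).
Proof. unfold Cmul, Cexpi; simpl; rewrite cos_plus, sin_plus; f_equal; ring. Qed.

Lemma Cpow_Cexpi a n : Cpow (Cexpi a) n = Cexpi (INR n * a).
Proof.
  induction n as [|n IH].
  - simpl; unfold Cexpi, Cone; rewrite Rmult_0_l, cos_0, sin_0; reflexivity.
  - simpl Cpow; rewrite IH, Cmul_Cexpi, S_INR; f_equal; ring.
Qed.

Lemma Cexpi_periodic a q : Cexpi (a + 2 * INR q * PI) = Cexpi a.
Proof. unfold Cexpi; rewrite cos_period, sin_period; reflexivity. Qed.

Lemma Cnorm_sq_root_of_unity rho k : (0 < k)%nat -> Cpow rho k = Cone -> Cnorm_sq rho = 1.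
Proof.
  intros Hk H.
  assert (E : Cnorm_sq rho ^ k = 1)
    by (rewrite <- Cnorm_sq_pow, H; unfold Cnorm_sq, Cone; simpl; ring).
  assert (0 <= Cnorm_sq rho) by (unfold Cnorm_sq; nra).
  destruct (Rtotal_order (Cnorm_sq rho) 1) as [Hl|[He|Hg]]; [|exact He|].
  - pose proof (pow_lt_1_compat (Cnorm_sq rho) k ltac:(lra) Hk); lra.
  - pose proof (Rlt_pow_R1 (Cnorm_sq rho) k Hg Hk); lra.
Qed.

Lemma unit_Cexpi rho : Cnorm_sq rho = 1 -> exists a, 0 <= a <= 2 * PI /\ rho = Cexpi a.
Proof.
  destruct rho as [x y]; unfold Cnorm_sq; simpl; intro H.
  assert (Hx : -1 <= x <= 1) by nra.
  assert (Hs : sqrt (1 - x²) = Rabs y)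
    by (rewrite <- sqrt_Rsqr_abs; f_equal; unfold Rsqr; nra).
  pose proof (acos_bound x).
  destruct (Rle_dec 0 y).
  - exists (acos x); split; [lra|]; unfold Cexpi.
    rewrite cos_acos, sin_acos, Hs, Rabs_right by lra; reflexivity.
  - exists (2 * PI - acos x); split; [lra|]; unfold Cexpi.
    rewrite cos_minus, sin_minus, cos_2PI, sin_2PI, cos_acos, sin_acos, Hs, Rabs_left by lra.
    f_equal; ring.
Qed.

Lemma cos_eq_1_nonneg x : 0 <= x -> cos x = 1 -> exists s : nat, x = 2 * INR s * PI.
Proof.
  intros Hx H.
  assert (Hs : sin (x / 2) = 0).
  { replace x with (2 * (x / 2)) in H by field; rewrite cos_2a_sin in H; nra. }
  destruct (sin_eq_0_0 _ Hs) as [z Hz].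
  assert (0 <= IZR z) by (pose proof PI_RGT_0; destruct (Rle_dec 0 (IZR z)); [assumption | nra]).
  apply le_IZR in H0.
  exists (Z.to_nat z); rewrite INR_IZR_INZ, Z2Nat.id by lia; lra.
Qed.

Lemma primitive_root_Cexpi k rho : (0 < k)%nat -> primitive_root rho k ->
  exists alpha s, rho = Cexpi alpha /\ INR k * alpha = 2 * INR s * PI /\
    forall n, (0 < n)%nat -> (n mod k <> 0)%nat -> cos (INR n * alpha) <> 1.
Proof.
  intros Hk [H1 H2].
  destruct (unit_Cexpi rho (Cnorm_sq_root_of_unity rho k Hk H1)) as [a [Ha ->]].
  rewrite Cpow_Cexpi in H1.
  assert (Hc : cos (INR k * a) = 1) by (unfold Cexpi, Cone in H1; injection H1; auto).
  destruct (cos_eq_1_nonneg (INR k * a) ltac:(pose proof (pos_INR k); nra) Hc) as [s Hs].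
  exists a, s; split; [reflexivity|]; split; [exact Hs|].
  intros n Hn Hmod Hcos.
  assert (Hsin : sin (INR n * a) = 0)
    by (pose proof (sin2_cos2 (INR n * a)) as E; rewrite Hcos in E; unfold Rsqr in E; nra).
  apply (H2 (n mod k)%nat); [split; [lia | apply Nat.mod_upper_bound; lia]|].
  rewrite Cpow_Cexpi, <- Cexpi_periodic with (q := (n / k * s)%nat).
  replace (INR (n mod k) * a + 2 * INR (n / k * s) * PI) with (INR n * a).
  - unfold Cexpi, Cone; rewrite Hcos, Hsin; reflexivity.
  - rewrite (Nat.div_mod n k) at 1 by lia.
    rewrite plus_INR, !mult_INR.
    replace (2 * (INR (n / k) * INR s) * PI) with (INR (n / k) * (2 * INR s * PI)) by ring.
    rewrite <- Hs; ring.
Qed.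

Lemma inv_Cnorm_chord t : 0 < t < 2 * PI ->
  / Cnorm (Csub (Cexpi t) Cone) = exp (- log_chord t).
Proof.
  intro Ht; pose proof (chord_sq_pos t Ht).
  unfold Cnorm, Csub, Cexpi, Cone; simpl fst; simpl snd.
  replace ((cos t - 1) ^ 2 + (sin t - 0) ^ 2) with (2 - 2 * cos t)
    by (pose proof (sin2_cos2 t) as E; unfold Rsqr in E; nra).
  rewrite exp_Ropp; f_equal.
  apply sqrt_lem_1; [lra | apply Rlt_le, exp_pos|].
  rewrite <- exp_plus; unfold log_chord.
  replace (ln (2 - 2 * cos t) / 2 + ln (2 - 2 * cos t) / 2) with (ln (2 - 2 * cos t)) by field.
  apply exp_ln; lra.
Qed.

(** * The grid of angles *)

Section Grid.

Variables (k M s : nat) (theta alpha : R).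
Hypothesis k_pos : (0 < k)%nat.
Hypothesis M_pos : (0 < M)%nat.
Hypothesis theta_pos : 0 < theta.
Hypothesis theta_lt : theta < 2 * PI / INR k.
Hypothesis k_alpha : INR k * alpha = 2 * INR s * PI.
Hypothesis cos_alpha_ne1 :
  forall n, (0 < n)%nat -> (n mod k <> 0)%nat -> cos (INR n * alpha) <> 1.

Definition step : R := theta / INR M.

(* The angle of the factor [j = k (m - 1) + r], reduced mod [2 PI] (see [grid_angle]). *)
Definition grid (r m : nat) : R :=
  residue_angle k s r + (INR r / INR k + INR m - 1) * step.

(* For [r < k], every angle used for the class [r] lies in [[margin, 2 PI - margin]]. *)
Definition margin : R := (2 * PI / INR k - theta) / 2.

Lemma INR_k_pos : 0 < INR k.
Proof. apply lt_0_INR; lia. Qed.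

Lemma step_pos : 0 < step.
Proof. apply Rdiv_lt_0_compat; [lra | apply lt_0_INR; lia]. Qed.

Lemma M_step : INR M * step = theta.
Proof. unfold step; field; apply not_0_INR; lia. Qed.

Lemma step_le_theta : step <= theta.
Proof.
  pose proof M_step; pose proof step_pos.
  assert (1 <= INR M) by (apply (le_INR 1); lia).
  nra.
Qed.

Lemma k_theta_lt : INR k * theta < 2 * PI.
Proof.
  pose proof INR_k_pos.
  apply (Rmult_lt_compat_l (INR k)) in theta_lt; [|lra].
  replace (INR k * (2 * PI / INR k)) with (2 * PI) in theta_lt by (field; lra); lra.
Qed.

Lemma margin_bounds : 0 < margin <= PI.
Proof.
  pose proof INR_k_pos; pose proof PI_RGT_0.
  assert (2 * PI / INR k <= 2 * PI).
  { apply (Rmult_le_reg_r (INR k)); [lra|].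
    unfold Rdiv; rewrite Rmult_assoc, Rinv_l by lra.
    assert (1 <= INR k) by (apply (le_INR 1); lia); nra. }
  unfold margin; lra.
Qed.

Lemma ratio_bounds r : (1 <= r <= k)%nat -> 0 < INR r / INR k <= 1.
Proof.
  intro Hr; pose proof INR_k_pos.
  split; [apply Rdiv_lt_0_compat; [apply lt_0_INR; lia | lra]|].
  apply (Rmult_le_reg_r (INR k)); [lra|].
  unfold Rdiv; rewrite Rmult_assoc, Rinv_l, Rmult_1_r, Rmult_1_l by lra.
  apply le_INR; lia.
Qed.

Lemma residue_angle_cases r : (1 <= r <= k)%nat ->
  (r = k /\ residue_angle k s r = 0)
  \/ 2 * PI / INR k <= residue_angle k s r <= 2 * PI - 2 * PI / INR k.
Proof.
  intro Hr; destruct (Nat.eq_dec r k) as [->|Hne].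
  - left; split; [reflexivity | apply residue_angle_k].
  - right; apply (residue_angle_bounds k s alpha k_pos k_alpha cos_alpha_ne1); lia.
Qed.

Lemma residue_angle_theta r : (1 <= r <= k)%nat ->
  0 <= residue_angle k s r /\ residue_angle k s r + theta < 2 * PI.
Proof.
  intro Hr; pose proof INR_k_pos; pose proof k_theta_lt; pose proof PI_RGT_0.
  assert (1 <= INR k) by (apply (le_INR 1); lia).
  assert (0 < 2 * PI / INR k) by (apply Rdiv_lt_0_compat; lra).
  destruct (residue_angle_cases r Hr) as [[_ ->] | ?]; nra.
Qed.

Definition grid_origin (r : nat) : R := residue_angle k s r + (INR r / INR k - 1) * step.

Lemma grid_eq r m : grid r m = grid_origin r + INR m * step.
Proof. unfold grid, grid_origin; ring. Qed.

Lemma grid_bounds r m : (1 <= r <= k)%nat -> (1 <= m <= M)%nat ->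
  residue_angle k s r < grid r m <= residue_angle k s r + theta.
Proof.
  intros Hr Hm; pose proof step_pos; pose proof M_step; pose proof (ratio_bounds r Hr).
  assert (1 <= INR m <= INR M) by (split; [apply (le_INR 1) | apply le_INR]; lia).
  unfold grid; split; nra.
Qed.

Lemma grid_angle r m : (1 <= r <= k)%nat -> (1 <= m <= M)%nat ->
  let j := (k * (m - 1) + r)%nat in
  INR j * alpha + INR j * theta / INR (M * k) = grid r m + 2 * INR ((m - 1) * s + s * r / k) * PI.
Proof.
  intros Hr Hm j; pose proof INR_k_pos.
  assert (INR M <> 0) by (apply not_0_INR; lia).
  unfold j, grid, step; rewrite plus_INR, mult_INR, Rmult_plus_distr_r.
  rewrite (INR_mul_alpha k s alpha k_pos k_alpha), plus_INR, !mult_INR, minus_INR by lia.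
  replace (INR k * (INR m - INR 1) * alpha) with ((INR m - INR 1) * (INR k * alpha)) by ring.
  rewrite k_alpha; simpl INR; field; lra.
Qed.

Definition lipschitz_const : R := ln 2 + Rabs (log_chord margin).

Definition grid_const : R :=
  2 * lipschitz_const + Rabs (log_chord theta) + Rabs (log_chord margin).

Lemma grid_origin_lower r : (1 <= r <= k)%nat -> 0 < grid_origin r + step / 2.
Proof.
  intro Hr; pose proof step_pos; pose proof step_le_theta; pose proof (ratio_bounds r Hr).
  pose proof margin_bounds; unfold grid_origin.
  destruct (residue_angle_cases r Hr) as [[-> ->] | ?].
  - replace (INR k / INR k) with 1 by (field; pose proof INR_k_pos; lra); lra.
  - unfold margin in *; nra.
Qed.

Lemma Clausen_grid_left r : (1 <= r <= k)%nat ->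
  Clausen (residue_angle k s r) - Clausen (grid_origin r + step / 2) <= step / 2 * lipschitz_const.
Proof.
  intro Hr; pose proof step_pos; pose proof step_le_theta; pose proof (ratio_bounds r Hr).
  pose proof margin_bounds; pose proof (residue_angle_theta r Hr); pose proof ln_lt_2.
  pose proof (Rabs_pos (log_chord margin)).
  eapply Rle_trans; [apply (Clausen_sub_le margin); [exact margin_bounds | lra | | ]|].
  - unfold grid_origin; nra.
  - destruct (Rle_dec (residue_angle k s r) (grid_origin r + step / 2)) as [Hle|Hgt];
      [left; exact Hle | right].
    destruct (residue_angle_cases r Hr) as [[-> E] | ?].
    + exfalso; apply Hgt; unfold grid_origin; rewrite E.
      replace (INR k / INR k) with 1 by (field; pose proof INR_k_pos; lra); lra.
    + unfold grid_origin, margin in *; nra.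
  - unfold lipschitz_const; apply Rmult_le_compat_r; [lra|].
    apply Rabs_le; unfold grid_origin; nra.
Qed.

Lemma grid_sum_right_end r : (1 <= r <= k)%nat ->
  grid_origin r + step / 2 <= grid_origin r + (INR (M - 1) + 1 / 2) * step
  <= residue_angle k s r + theta.
Proof.
  intro Hr; pose proof step_pos; pose proof M_step; pose proof (ratio_bounds r Hr).
  rewrite minus_INR by lia.
  assert (1 <= INR M) by (apply (le_INR 1); lia).
  unfold grid_origin; simpl INR; split; nra.
Qed.

Lemma Clausen_grid_right r : (1 <= r <= k)%nat ->
  Clausen (grid_origin r + (INR (M - 1) + 1 / 2) * step) - Clausen (residue_angle k s r + theta)
  <= 3 / 2 * step * lipschitz_const.
Proof.
  intro Hr; pose proof step_pos; pose proof M_step; pose proof (ratio_bounds r Hr).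
  pose proof (residue_angle_theta r Hr); pose proof (grid_origin_lower r Hr).
  pose proof (grid_sum_right_end r Hr); pose proof ln_lt_2.
  pose proof (Rabs_pos (log_chord margin)).
  eapply Rle_trans;
    [apply (Clausen_sub_le margin); [exact margin_bounds | lra | lra | left; lra]|].
  unfold lipschitz_const; apply Rmult_le_compat_r; [lra|].
  apply Rabs_le; rewrite minus_INR in * by lia; unfold grid_origin in *; simpl INR in *; nra.
Qed.

Lemma log_chord_grid_last r : (1 <= r <= k)%nat ->
  - (Rabs (log_chord theta) + Rabs (log_chord margin)) <= log_chord (grid r M).
Proof.
  intro Hr.
  pose proof (Rle_abs (- log_chord theta)); pose proof (Rle_abs (- log_chord margin)).
  rewrite Rabs_Ropp in *; pose proof (Rabs_pos (log_chord theta)).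
  pose proof (Rabs_pos (log_chord margin)).
  destruct (residue_angle_cases r Hr) as [[-> E] | ?].
  - replace (grid k M) with theta; [lra|].
    unfold grid; rewrite E, <- M_step; field; pose proof INR_k_pos; lra.
  - pose proof (grid_bounds r M Hr ltac:(lia)); pose proof margin_bounds.
    assert (log_chord margin <= log_chord (grid r M))
      by (apply log_chord_ge_margin; [exact margin_bounds | unfold margin in *; lra]).
    lra.
Qed.

(* The last grid point is kept out of the midpoint sum: its midpoint cell may reach past
   [residue_angle r + theta], even past [2 PI]. *)
Lemma log_chord_grid_class_ge r : (1 <= r <= k)%nat ->
  Clausen (residue_angle k s r) - Clausen (residue_angle k s r + theta) - step * grid_const
  <= step * sum_from1 (fun m => log_chord (grid r m)) M.
Proof.
  intro Hr.
  replace (sum_from1 (fun m => log_chord (grid r m)) M)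
    with (sum_from1 (fun m => log_chord (grid_origin r + INR m * step)) (M - 1)
          + log_chord (grid r M)).
  2: { replace M with (S (M - 1)) at 3 by lia; cbn [sum_from1].
       replace (S (M - 1)) with M by lia.
       f_equal; apply sum_from1_ext; intros; rewrite grid_eq; reflexivity. }
  pose proof (grid_sum_right_end r Hr); pose proof (residue_angle_theta r Hr).
  pose proof (Clausen_riemann_le (grid_origin r) step (M - 1) step_pos
                (grid_origin_lower r Hr) ltac:(lra)).
  pose proof (Clausen_grid_left r Hr); pose proof (Clausen_grid_right r Hr).
  pose proof (log_chord_grid_last r Hr); pose proof step_pos.
  unfold grid_const; nra.
Qed.

Lemma log_chord_grid_sum_ge :
  - (Clausen (INR k * theta) / INR k) - INR k * (step * grid_const)
  <= step * sum_from1 (fun r => sum_from1 (fun m => log_chord (grid r m)) M) k.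
Proof.
  pose proof INR_k_pos.
  rewrite <- sum_from1_scal.
  eapply Rle_trans; [|apply sum_from1_le; intros r Hr; apply log_chord_grid_class_ge, Hr].
  rewrite (sum_from1_ext _ (fun r => Clausen (residue_angle k s r + 0)
             + (-1 * Clausen (residue_angle k s r + theta) + - (step * grid_const))))
    by (intros; rewrite Rplus_0_r; ring).
  rewrite !sum_from1_plus, sum_from1_scal, sum_from1_const,
    !(Clausen_residue_sum k s alpha k_pos k_alpha cos_alpha_ne1), Rmult_0_r, Clausen_0.
  right; field; lra.
Qed.

Lemma chord_product_eq :
  prod_from1 (fun j => / Cnorm (Csub (Cmul (Cpow (Cexpi alpha) j)
                                           (Cexpi (INR j * theta / INR (M * k)))) Cone))
    (M * k)
  = exp (- sum_from1 (fun r => sum_from1 (fun m => log_chord (grid r m)) M) k).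
Proof.
  set (G := fun j => log_chord (INR j * alpha + INR j * theta / INR (M * k))).
  assert (HG : forall r m, (1 <= r <= k)%nat -> (1 <= m <= M)%nat ->
             G (k * (m - 1) + r)%nat = log_chord (grid r m)).
  { intros r m Hr Hm; unfold G; rewrite (grid_angle r m Hr Hm).
    unfold log_chord; rewrite cos_period; reflexivity. }
  rewrite (prod_from1_exp _ G).
  - rewrite Nat.mul_comm, sum_from1_blocks, <- sum_from1_comm; f_equal; f_equal.
    apply sum_from1_ext; intros m Hm; apply sum_from1_ext; intros r Hr; apply HG; assumption.
  - intros j Hj.
    rewrite Cpow_Cexpi, Cmul_Cexpi.
    destruct (block_index k j k_pos ltac:(lia)) as [m [r [Ej [Hr Hm1]]]].
    assert (Hm : (1 <= m <= M)%nat) by nia.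
    subst j; rewrite (HG r m Hr Hm), (grid_angle r m Hr Hm), Cexpi_periodic.
    apply inv_Cnorm_chord.
    pose proof (grid_bounds r m Hr Hm); pose proof (residue_angle_theta r Hr); lra.
Qed.
Lemma chord_product_le :
  prod_from1 (fun j => / Cnorm (Csub (Cmul (Cpow (Cexpi alpha) j)
                                           (Cexpi (INR j * theta / INR (M * k)))) Cone))
    (M * k)
  <= exp (INR k * grid_const)
     * exp (INR (M * k) / INR k * (Clausen (INR k * theta) / (INR k * theta))).
Proof.
  rewrite chord_product_eq, <- exp_plus.
  pose proof log_chord_grid_sum_ge as Hsum; pose proof step_pos; pose proof INR_k_pos.
  set (S := sum_from1 _ k) in *.
  assert (HS : - S <= INR k * grid_const
                      + INR (M * k) / INR k * (Clausen (INR k * theta) / (INR k * theta))).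
  { apply (Rmult_le_reg_l step); [assumption|].
    replace (step * (INR k * grid_const
                     + INR (M * k) / INR k * (Clausen (INR k * theta) / (INR k * theta))))
      with (Clausen (INR k * theta) / INR k + INR k * (step * grid_const)).
    - lra.
    - assert (0 < INR M) by (apply lt_0_INR; lia).
      unfold step; rewrite mult_INR; field; lra. }
  destruct (Rle_lt_or_eq_dec _ _ HS) as [Hlt | ->];
    [apply Rlt_le, exp_increasing, Hlt | apply Rle_refl].
Qed.

End Grid.

Theorem proposition4p6 :
  forall (k : nat) (theta : R),
    (0 < k)%nat ->
    0 < theta < 2 * PI / INR k ->
    forall cl : R, Cl2_is (INR k * theta) cl ->
    exists C : R, 0 < C /\
      forall (rho : Cx), primitive_root rho k ->
      forall N : nat, (1 <= N)%nat -> Nat.divide k N ->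
        prod_from1
          (fun j => / Cnorm (Csub (Cmul (Cpow rho j)
                                        (Cexpi (INR j * theta / INR N))) Cone))
          N
        <= C * INR N ^ (4 * k)
             * exp (INR N / INR k * (cl / (INR k * theta))).
Proof.
  intros k theta Hk [Ht Ht2] cl Hcl.
  exists (exp (INR k * grid_const k theta)); split; [apply exp_pos|].
  intros rho Hrho N HN [M ->].
  destruct (primitive_root_Cexpi k rho Hk Hrho) as [alpha [s [-> [Hks Hne1]]]].
  eapply Rle_trans; [apply (chord_product_le k M s theta alpha); auto; lia|].
  rewrite (Cl2_is_Clausen _ _ Hcl).
  assert (1 <= INR (M * k) ^ (4 * k)) by (apply pow_R1_Rle, (le_INR 1); lia).
  pose proof (exp_pos (INR k * grid_const k theta)).
  pose proof (exp_pos (INR (M * k) / INR k * (Clausen (INR k * theta) / (INR k * theta)))).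
  apply Rmult_le_compat_r; nra.
Qed.
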